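(* A numerical semigroup $S$ with multiplicity $e$ and blowup $B$ is additive if and only if ${\rm adj}(S)=\operatorname{Ap}(B;e)$.
   Context: $S$ is a numerical semigroup (a submonoid of $\mathbb N$ with finite complement) with minimal generators $e<a_1<\dots<a_t$. ${\rm ord}(n;S)$ is the maximum of $\sum c_i$ over $(c_0,\dots,c_t)\in\mathbb N^{t+1}$ with $c_0e+\sum c_ia_i=n$. $S$ is additive if ${\rm ord}(u+e;S)={\rm ord}(u;S)+1$ for all $u\in S$. ${\rm adj}(S)=\{s-{\rm ord}(s;S)e:s\in S\}$. The blowup is $B=\langle e,a_1-e,\dots,a_t-e\rangle$, and $\operatorname{Ap}(B;e)=\{w\in B:w-e\notin B\}$. *)

From mathcomp Require Import all_boot.
Set Implicit Arguments. Unset Strict Implicit. Unset Printing Implicit Defensive.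

Definition numerical_semigroup (S : nat -> Prop) : Prop :=
  [/\ S 0,
      (forall x y, S x -> S y -> S (x + y)) &
      (exists N, forall n, N <= n -> S n)].

Definition multiplicity (S : nat -> Prop) (e : nat) : Prop :=
  [/\ S e, 0 < e & forall s, S s -> 0 < s -> e <= s].

Definition min_gen (S : nat -> Prop) (a : nat) : Prop :=
  [/\ S a, 0 < a & ~ (exists b c, [/\ S b, S c, 0 < b, 0 < c & a = b + c])].

(* A factorization of n over the minimal generators of S, written as the list
   of generators used (with repetition); its length is sum_i c_i. *)
Definition factorization (S : nat -> Prop) (n : nat) (l : seq nat) : Prop :=
  (forall a, a \in l -> min_gen S a) /\ sumn l = n.

Definition is_ord (S : nat -> Prop) (n k : nat) : Prop :=
  (exists l, factorization S n l /\ size l = k) /\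
  (forall l, factorization S n l -> size l <= k).

Definition additive (S : nat -> Prop) (e : nat) : Prop :=
  forall u k, S u -> is_ord S u k -> is_ord S (u + e) k.+1.

Definition adj (S : nat -> Prop) (e : nat) (x : nat) : Prop :=
  exists s k, [/\ S s, is_ord S s k & x = s - k * e].

Definition blowup_gen (S : nat -> Prop) (e g : nat) : Prop :=
  g = e \/ exists a, [/\ min_gen S a, a <> e & g = a - e].

Definition blowup (S : nat -> Prop) (e : nat) (x : nat) : Prop :=
  exists l : seq nat, (forall g, g \in l -> blowup_gen S e g) /\ sumn l = x.

(* Apery set Ap(B; e) = { w in B : w - e notin B } (w - e an integer). *)
Definition apery (B : nat -> Prop) (e : nat) (w : nat) : Prop :=
  B w /\ ~ (e <= w /\ B (w - e)).

(* A factorization l of n over the minimal generators gives the element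
   n - |l| e = sum (a_i - e) of the blowup B, and every element of B is of the
   form n - |l| e + d e.  An Apery element of B therefore has d = 0 and comes
   from a factorization of maximal length, i.e. lies in adj(S).  Conversely, a
   factorization of n longer than |l| puts (n - |l| e) - e in B; for
   s - ord(s) e this is excluded by additivity (a longer factorization of
   s + m e), and the Apery condition on u - ord(u) e forbids ord(u + e) to
   exceed ord(u) + 1. *)
From Stdlib Require Import Classical.
From mathcomp Require Import all_boot zify.
Set Implicit Arguments. Unset Strict Implicit. Unset Printing Implicit Defensive.

Lemma bounded_ex_max (P : nat -> Prop) N :
  (exists m, P m) -> (forall k, P k -> k <= N) ->
  exists k, P k /\ forall j, P j -> j <= k.
Proof.
elim: N => [|N IHN] [m Pm] ub.
  exists 0; split=> [|j /ub //].
  by have := ub _ Pm; rewrite leqn0 => /eqP <-.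
case: (classic (P N.+1)) => [PN|nPN]; first by exists N.+1.
apply: IHN => [|k Pk]; first by exists m.
have := ub _ Pk; rewrite leq_eqVlt => /orP [/eqP Ek|//].
by case: nPN; rewrite -Ek.
Qed.

Section Factorizations.

Variables (S : nat -> Prop) (e : nat).
Hypothesis multS : multiplicity S e.

Lemma min_gen_ge_mult a : min_gen S a -> e <= a.
Proof. by case: multS => _ _ minS [Sa a_gt0 _]; apply: minS. Qed.

Lemma min_gen_mult : min_gen S e.
Proof.
case: multS => Se e_gt0 minS; split=> // -[b [c [Sb Sc b_gt0 c_gt0 ebc]]].
by have := minS _ Sb b_gt0; have := minS _ Sc c_gt0; lia.
Qed.

Lemma factorization_cons n a l :
  min_gen S a -> factorization S n l -> factorization S (a + n) (a :: l).
Proof.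
move=> gen_a [gen_l <-]; split=> // b.
by rewrite inE => /orP [/eqP ->|/gen_l].
Qed.

Lemma factorization_cat n1 n2 l1 l2 :
  factorization S n1 l1 -> factorization S n2 l2 ->
  factorization S (n1 + n2) (l1 ++ l2).
Proof.
move=> [gen1 <-] [gen2 <-]; split; last by rewrite sumn_cat.
by move=> a; rewrite mem_cat => /orP [/gen1|/gen2].
Qed.

Lemma factorization_nseq d : factorization S (d * e) (nseq d e).
Proof.
split; last by rewrite sumn_nseq mulnC.
by move=> a /nseqP [-> _]; apply: min_gen_mult.
Qed.

Lemma factorization_behead n a l :
  factorization S n (a :: l) -> factorization S (n - a) l /\ min_gen S a.
Proof.
move=> [gen <-]; split; last exact: gen (mem_head _ _).
split=> [b lb|/=]; last by rewrite addKn.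
by apply: gen; rewrite inE lb orbT.
Qed.

Lemma size_factorization_le n l : factorization S n l -> size l * e <= n.
Proof.
elim: l n => [|a l IHl] n F //=.
have [/IHl le_le gen_a] := factorization_behead F.
have := min_gen_ge_mult gen_a; case: F => _ /= n_eq; rewrite mulSn; lia.
Qed.

Lemma is_ord_exists n l : factorization S n l -> exists k, is_ord S n k.
Proof.
move=> F.
have e_gt0 : 0 < e by case: multS.
have [k [[l' [F' <-]] maxk]] :
    exists k, (exists l, factorization S n l /\ size l = k) /\
              forall j, (exists l, factorization S n l /\ size l = j) -> j <= k.
  apply: (bounded_ex_max (N := n)) => [|j [l' [F' <-]]]; first by exists (size l), l.
  by have := size_factorization_le F'; nia.
exists (size l'); split; first by exists l'.
by move=> l'' F''; apply: maxk; exists l''.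
Qed.

Lemma blowup_add x y : blowup S e x -> blowup S e y -> blowup S e (x + y).
Proof.
move=> [l1 [gen1 <-]] [l2 [gen2 <-]]; exists (l1 ++ l2).
split; last by rewrite sumn_cat.
by move=> g; rewrite mem_cat => /orP [/gen1|/gen2].
Qed.

Lemma blowup_mul_mult d : blowup S e (d * e).
Proof.
exists (nseq d e); split; last by rewrite sumn_nseq mulnC.
by move=> g /nseqP [-> _]; left.
Qed.

Lemma blowup_factorization n l : factorization S n l -> blowup S e (n - size l * e).
Proof.
elim: l n => [|a l IHl] n F; first by exists [::]; case: F => _ <-.
have [Fl gen_a] := factorization_behead F.
have le_le := size_factorization_le Fl.
have le_ea := min_gen_ge_mult gen_a.
have [b [gen_b sum_b]] := IHl _ Fl.
have n_eq : n = a + (n - a) by case: F => _ <-; rewrite /= addKn.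
case: (eqVneq a e) => [ae|ane].
  by exists b; split=> //; rewrite sum_b /= mulSn; lia.
exists ((a - e) :: b); split.
  move=> g; rewrite inE => /orP [/eqP ->|/gen_b //].
  by right; exists a; split=> //; apply/eqP.
by rewrite /= sum_b mulSn; lia.
Qed.

Lemma blowupP w :
  blowup S e w <->
  exists n l d, factorization S n l /\ w + size l * e = n + d * e.
Proof.
split=> [[b [gen_b <-]]|[n [l [d [F w_eq]]]]]; last first.
  have -> : w = (n - size l * e) + d * e.
    by have := size_factorization_le F; lia.
  by apply: blowup_add; [apply: blowup_factorization F|apply: blowup_mul_mult].
elim: b gen_b => [|g b IHb] gen_gb; first by exists 0, [::], 0; split.
have [n [l [d [F w_eq]]]] : exists n l d,
    factorization S n l /\ sumn b + size l * e = n + d * e.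
  by apply: IHb => h hb; apply: gen_gb; rewrite inE hb orbT.
case: (gen_gb g (mem_head _ _)) => [->|[a [gen_a _ ->]]].
  by exists n, l, d.+1; split=> //=; rewrite mulSn; lia.
exists (a + n), (a :: l), d; split; first exact: factorization_cons.
by have := min_gen_ge_mult gen_a; rewrite /= mulSn; lia.
Qed.

Lemma not_apery_factorization n l j :
  factorization S n l -> j < size l -> ~ apery (blowup S e) e (n - j * e).
Proof.
move=> F lt_jl [_]; apply.
have le_le := size_factorization_le F.
have e_gt0 : 0 < e by case: multS.
split; first nia.
apply/blowupP; exists n, l, (size l - j.+1); split=> //; nia.
Qed.

Hypothesis semS : numerical_semigroup S.

Lemma factorization_mem n l : factorization S n l -> S n.
Proof.
case: semS => S0 SD _; elim: l n => [|a l IHl] n F; first by case: F => _ <-.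
have [/IHl Sl [Sa _ _]] := factorization_behead F.
by move: Sl; case: F => _ /= <-; rewrite addKn; apply: SD.
Qed.

Lemma mem_add_mul_mult s m : S s -> S (s + m * e).
Proof.
case: semS => _ SD _ Ss; rewrite -[s]addn0 -addnA.
by apply: SD => //; apply: factorization_mem (factorization_nseq m).
Qed.

Lemma additive_is_ord_add s k m :
  additive S e -> S s -> is_ord S s k -> is_ord S (s + m * e) (k + m).
Proof.
move=> addS Ss ord_s; elim: m => [|m IHm]; first by rewrite !addn0.
have := addS _ _ (mem_add_mul_mult m Ss) IHm.
by rewrite mulSn addnS (addnC e) addnA.
Qed.

Lemma apery_adj w : apery (blowup S e) e w -> adj S e w.
Proof.
move=> ap_w; have [/blowupP [n [l [d [F w_eq]]]] _] := ap_w.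
have le_le := size_factorization_le F.
have d0 : d = 0.
  case: d w_eq => // d w_eq; exfalso; case: ap_w => _; apply.
  split; first nia.
  by apply/blowupP; exists n, l, d; split=> //; rewrite mulSn in w_eq; lia.
rewrite d0 addn0 in w_eq.
have [k ord_n] := is_ord_exists F.
have le_lk : size l <= k by case: ord_n => _; apply.
case: (ltnP (size l) k) => [lt_lk|le_kl].
  case: ord_n => -[L [FL size_L]] _.
  have := not_apery_factorization (j := size l) FL; rewrite size_L => /(_ lt_lk).
  by have -> : n - size l * e = w by lia.
have k_eq : k = size l by lia.
by exists n, k; split=> //; [exact: factorization_mem F | lia].
Qed.

Lemma additive_adj_apery x : additive S e -> adj S e x -> apery (blowup S e) e x.
Proof.
move=> addS [s [k [Ss ord_s ->]]].
have [[l [F size_l]] _] := ord_s.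
have le_ks := size_factorization_le F; rewrite size_l in le_ks.
split; first by apply/blowupP; exists s, l, 0; rewrite size_l addn0; split=> //; lia.
move=> [le_e /blowupP [n [l' [d [F' eq']]]]].
have F'' : factorization S (s + size l' * e) (l' ++ nseq (d + k).+1 e).
  have -> : s + size l' * e = n + (d + k).+1 * e by rewrite mulSn mulnDl; lia.
  exact: factorization_cat F' (factorization_nseq _).
have [_ /(_ _ F'')] := additive_is_ord_add (size l') addS Ss ord_s.
by rewrite size_cat size_nseq; lia.
Qed.

Lemma adj_apery_additive :
  (forall x, adj S e x -> apery (blowup S e) e x) -> additive S e.
Proof.
move=> adj_ap u k Su ord_u.
have [[l [F size_l]] _] := ord_u.
have Fe : factorization S (e + u) (e :: l) := factorization_cons min_gen_mult F.
rewrite addnC in Fe.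
have [k' ord_ue] := is_ord_exists Fe.
have le_kk' : k.+1 <= k' by case: ord_ue => _ /(_ _ Fe); rewrite /= size_l.
suff le_k'k : k' <= k.+1 by have -> : k.+1 = k' by lia.
rewrite leqNgt; apply/negP => lt_kk'.
have [[L [FL size_L]] _] := ord_ue.
have := not_apery_factorization (j := k.+1) FL; rewrite size_L => /(_ lt_kk').
have -> : u + e - k.+1 * e = u - k * e by rewrite mulSn; lia.
by apply; apply: adj_ap; exists u, k.
Qed.

End Factorizations.

Theorem proposition4p7 (S : nat -> Prop) (e : nat) :
  numerical_semigroup S -> multiplicity S e ->
  (additive S e <-> (forall x, adj S e x <-> apery (blowup S e) e x)).
Proof.
move=> semS multS; split=> [addS x|adj_ap].
  by split; [apply: additive_adj_apery | apply: apery_adj].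
by apply: adj_apery_additive => // x /adj_ap.
Qed.
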